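(* Let $P$ be an $(\epsilon_1,\epsilon_2)$-significant instance of $k$-means clustering with $z$ outliers and let $\eta,\delta,\xi\in(0,1)$. If one uniformly selects a set $S$ of $\max\{\frac{3k}{\delta^2\epsilon_1}\log\frac{2k}{\eta},\frac{k}{2\xi^2\epsilon_1(1-\delta)}\log\frac{2k}{\eta}\}$ points at random from $P$, then with probability at least $(1-\eta)^2$, for every $1\le j\le k$, $$\sum_{q\in S\cap C^*_j}\|q-o^*_j\|^2\le(1+\delta)\frac{|S|}{n}\Big(\sum_{p\in C^*_j}\|p-o^*_j\|^2+\xi|C^*_j|\mathcal{L}^2\Big).$$
   Context: $P\subset\mathbb{R}^D$, $|P|=n$, $0<z<n$. $P_{opt}\subset P$ with $|P_{opt}|=n-z$ is the set of inliers of an optimal solution of $k$-means clustering with $z$ outliers, and $C^*_1,\dots,C^*_k$ are the optimal clusters forming $P_{opt}$; $o^*_j$ is the mean of $C^*_j$; $\mathcal{L}=\max_l\max_{p,q\in C^*_l}\|p-q\|$. The instance is $(\epsilon_1,\epsilon_2)$-significant ($\epsilon_1,\epsilon_2>0$) if $\min_j|C^*_j|\ge\frac{\epsilon_1}{k}n$ and $z=\frac{\epsilon_2}{k}n$. Sampling uniformly at random means each sample point is drawn independently and uniformly from $P$; $S$ is a multiset and sums over $S\cap C^*_j$ count multiplicity. *)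

From HB Require Import structures.
From mathcomp Require Import all_boot all_order all_algebra.
From mathcomp Require Import reals exp.
Set Implicit Arguments. Unset Strict Implicit. Unset Printing Implicit Defensive.
Import Order.TTheory GRing.Theory Num.Theory.
Local Open Scope ring_scope.

Section Defs.
Variable R : realType.

Definition sqdist (D : nat) (u v : 'rV[R]_D) : R := \sum_(i < D) (u 0 i - v 0 i) ^+ 2.
Definition dist (D : nat) (u v : 'rV[R]_D) : R := Num.sqrt (sqdist u v).

Definition mean (n D : nat) (x : 'I_n -> 'rV[R]_D) (A : {set 'I_n}) : 'rV[R]_D :=
  (#|A|%:R)^-1 *: \sum_(p in A) x p.

Definition valid_clustering (n k z : nat) (C : 'I_k -> {set 'I_n}) : Prop :=
  (forall i j : 'I_k, i != j -> [disjoint C i & C j]) /\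
  #|\bigcup_(j < k) C j| = (n - z)%N.

(* k-means cost of a clustering: each cluster is served by its mean (optimal center) *)
Definition kmeans_cost (n D k : nat) (x : 'I_n -> 'rV[R]_D) (C : 'I_k -> {set 'I_n}) : R :=
  \sum_(j < k) \sum_(p in C j) sqdist (x p) (mean x (C j)).

Definition optimal_clustering (n D k z : nat) (x : 'I_n -> 'rV[R]_D)
    (C : 'I_k -> {set 'I_n}) : Prop :=
  valid_clustering z C /\
  forall C' : 'I_k -> {set 'I_n}, valid_clustering z C' -> kmeans_cost x C <= kmeans_cost x C'.

Definition max_diam (n D k : nat) (x : 'I_n -> 'rV[R]_D) (C : 'I_k -> {set 'I_n}) : R :=
  \big[Num.max/0]_(l < k) \big[Num.max/0]_(p in C l) \big[Num.max/0]_(q in C l)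
     dist (x p) (x q).

Definition significant (n k z : nat) (C : 'I_k -> {set 'I_n}) (eps1 eps2 : R) : Prop :=
  0 < eps1 /\ 0 < eps2 /\
  (forall j : 'I_k, eps1 / k%:R * n%:R <= #|C j|%:R) /\
  z%:R = eps2 / k%:R * n%:R.

(* probability of an event when m indices are drawn independently and uniformly
   from 'I_n (a sample is a function 'I_m -> 'I_n, all n^m of them equally likely) *)
Definition sample_prob (n m : nat) (E : {ffun 'I_m -> 'I_n} -> bool) : R :=
  #|[set s : {ffun 'I_m -> 'I_n} | E s]|%:R / (n ^ m)%:R.

End Defs.

(* Fix a cluster C_j and let d p = ||p - o_j||^2.  Every point of C_j lies within
   L^2 of the mean o_j, so the sampled cost of C_j is a sum of |S| independent draws
   of a variable with values in [0, L^2] and mean cost(C_j) / n.  Bounding its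
   exponential moment with exp t <= 1 + t / (1 - lam L^2) and lam = delta / ((1 + delta) L^2)
   gives a Chernoff bound exp(- delta xi |C_j| |S| / n) on the probability of exceeding
   (1 + delta) |S| / n (cost(C_j) + xi |C_j| L^2).  The sample size together with
   |C_j| >= eps1 n / k makes this at most eta / (2 k); a union bound over the k clusters
   leaves probability at least 1 - eta / 2 >= (1 - eta)^2. *)

From mathcomp Require Import all_boot all_order all_algebra.
From mathcomp Require Import reals sequences exp.
From mathcomp Require Import ring lra.
Set Implicit Arguments. Unset Strict Implicit.
Import Order.TTheory GRing.Theory Num.Theory.
Local Open Scope ring_scope.

Lemma sqr_sum_le_card_sum_sqr (R : realFieldType) (I : finType) (A : {set I}) (u : I -> R) :
  (\sum_(q in A) u q) ^+ 2 <= #|A|%:R * \sum_(q in A) u q ^+ 2.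
Proof.
set S1 := \sum_(q in A) u q; set S2 := \sum_(q in A) u q ^+ 2.
have expand q : \sum_(r in A) (u q - u r) ^+ 2 = #|A|%:R * u q ^+ 2 - u q * S1 *+ 2 + S2.
  rewrite (eq_bigr (fun r => u q ^+ 2 - u q * u r *+ 2 + u r ^+ 2)); last by move=> r _; ring.
  by rewrite big_split sumrB /= sumr_const sumrMnl -mulr_sumr mulr_natl.
have : 0 <= \sum_(q in A) \sum_(r in A) (u q - u r) ^+ 2.
  by do 2![apply: sumr_ge0 => ? _]; exact: sqr_ge0.
rewrite (eq_bigr _ (fun q _ => expand q)) big_split sumrB /= sumr_const.
rewrite -mulr_sumr sumrMnl -mulr_suml -/S1 -/S2 mulr_natl -expr2.
lra.
Qed.

Section Geometry.
Variables (R : realType) (n D : nat) (x : 'I_n -> 'rV[R]_D).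

Lemma sqdist_ge0 (u v : 'rV[R]_D) : 0 <= sqdist u v.
Proof. by apply: sumr_ge0 => i _; exact: sqr_ge0. Qed.

Lemma sqdist_mean_le_avg (u : 'rV[R]_D) (A : {set 'I_n}) : (0 < #|A|)%N ->
  sqdist u (mean x A) <= #|A|%:R^-1 * \sum_(q in A) sqdist u (x q).
Proof.
move=> A_gt0; have c_gt0 : (0 : R) < #|A|%:R by rewrite ltr0n.
rewrite /sqdist exchange_big mulr_sumr; apply: ler_sum => i _.
have -> : u 0 i - mean x A 0 i = #|A|%:R^-1 * \sum_(q in A) (u 0 i - x q 0 i).
  rewrite /mean mxE summxE sumrB sumr_const -mulr_natl.
  by field; rewrite gt_eqF.
rewrite exprMn expr2 -mulrA ler_pM2l ?invr_gt0 // ler_pdivrMl //.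
exact: sqr_sum_le_card_sum_sqr.
Qed.

Lemma sqdist_le_max_diam k (C : 'I_k -> {set 'I_n}) j p q :
  p \in C j -> q \in C j -> sqdist (x p) (x q) <= max_diam x C ^+ 2.
Proof.
move=> pC qC.
have dist_le : dist (x p) (x q) <= max_diam x C.
  apply: le_trans (le_bigmax _ _ j); apply: le_trans (le_bigmax_cond _ _ pC).
  exact: (le_bigmax_cond _ _ qC).
rewrite -(sqr_sqrtr (sqdist_ge0 (x p) (x q))) lerXn2r ?nnegrE ?sqrtr_ge0 //.
exact: le_trans (sqrtr_ge0 _) dist_le.
Qed.

Lemma sqdist_mean_le_max_diam k (C : 'I_k -> {set 'I_n}) j p :
  p \in C j -> sqdist (x p) (mean x (C j)) <= max_diam x C ^+ 2.
Proof.
move=> pC; have C_gt0 : (0 < #|C j|)%N by apply/card_gt0P; exists p.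
apply: le_trans (sqdist_mean_le_avg (x p) C_gt0) _.
rewrite ler_pdivrMl ?ltr0n // mulr_natl -sumr_const.
by apply: ler_sum => q qC; exact: sqdist_le_max_diam pC qC.
Qed.

End Geometry.

Lemma expR_le_1Dx_div (R : realType) (t c : R) : 0 <= t <= c -> c < 1 ->
  expR t <= 1 + t / (1 - c).
Proof.
move=> /andP[t_ge0 t_le_c] c_lt1.
have t_lt1 : t < 1 by exact: le_lt_trans c_lt1.
have expR_le_inv : expR t <= (1 - t)^-1.
  rewrite -[t in expR t]opprK expRN lef_pV2 ?posrE ?expR_gt0 ?subr_gt0 //.
  exact: expR_ge1Dx.
apply: le_trans expR_le_inv _.
have -> : (1 - t)^-1 = 1 + t / (1 - t) by field; rewrite subr_eq0 gt_eqF.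
rewrite lerD2l ler_wpM2l // lef_pV2 ?posrE ?subr_gt0 //.
by rewrite lerB.
Qed.

Lemma sum_ffun_expR_sum (R : realType) (I : finType) m (y : I -> R) :
  \sum_(s : {ffun 'I_m -> I}) expR (\sum_(i < m) y (s i)) = (\sum_p expR (y p)) ^+ m.
Proof.
rewrite -[in RHS](card_ord m) -prodr_const bigA_distr_bigA /=.
by apply: eq_bigr => s _; rewrite expR_sum.
Qed.

Lemma card_bigcup_le (I T : finType) (F : I -> {set T}) :
  (#|\bigcup_i F i| <= \sum_i #|F i|)%N.
Proof.
elim/big_rec2: _ => [|i U c _ IH]; first by rewrite cards0.
by apply: leq_trans (leq_card_setU _ _) _; rewrite leq_add2l.
Qed.

Section SampleProb.
Variables (R : realType) (n m : nat).
Local Notation sample := {ffun 'I_m -> 'I_n}.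
Hypothesis n_gt0 : (0 < n)%N.
Local Notation N := ((n ^ m)%:R : R).

Let N_gt0 : 0 < N. Proof. by rewrite ltr0n expn_gt0 n_gt0. Qed.

Lemma eq_sample_prob (E E' : sample -> bool) : E =1 E' ->
  sample_prob R E = sample_prob R E'.
Proof.
by move=> eqE; rewrite /sample_prob (@eq_card _ _ [set s | E' s]) // => s; rewrite !inE eqE.
Qed.

Lemma sample_prob_forall_ge k (E : 'I_k -> sample -> bool) :
  1 - \sum_j sample_prob R (fun s => ~~ E j s) <= sample_prob R (fun s => [forall j, E j s]).
Proof.
set S := [set s : sample | [forall j, E j s]].
have splitN : N = #|S|%:R + #|~: S|%:R.
  by rewrite -natrD cardsC card_ffun !card_ord.
have compl : ~: S = \bigcup_j [set s : sample | ~~ E j s].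
  apply/setP => s; rewrite !inE negb_forall.
  apply/existsP/bigcupP => [[j Ej] | [j _]]; last by rewrite inE; exists j.
  by exists j; rewrite ?inE.
have card_compl : (#|~: S| <= \sum_j #|[set s : sample | ~~ E j s]|)%N.
  by rewrite compl; exact: card_bigcup_le.
rewrite /sample_prob -/S.
have -> : #|S|%:R / N = 1 - #|~: S|%:R / N.
  by rewrite splitN; field; rewrite -splitN gt_eqF.
rewrite -mulr_suml -natr_sum lerD2l lerN2.
by rewrite ler_pM2r ?invr_gt0 // ler_nat.
Qed.

Lemma sample_prob_gt_le_mgf (f : sample -> R) (lam T : R) : 0 <= lam ->
  sample_prob R (fun s => T < f s) <= expR (- (lam * T)) * (\sum_s expR (lam * f s)) / N.
Proof.
move=> lam_ge0; rewrite /sample_prob ler_pM2r ?invr_gt0 //.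
rewrite -sumr_const mulr_sumr big_mkcond /=; apply: ler_sum => s _.
rewrite inE; case: ifP => [T_lt|_]; last by rewrite mulr_ge0 ?expR_ge0.
by rewrite -expRD -expR0 ler_expR addrC -mulrBr mulr_ge0 // subr_ge0 ltW.
Qed.

Lemma sample_prob_sum_gt_le (y : 'I_n -> R) (lam B T : R) :
  0 <= lam -> lam * B < 1 -> (forall p, 0 <= y p <= B) ->
  sample_prob R (fun s : sample => T < \sum_(i < m) y (s i))
  <= expR (m%:R * (lam / (1 - lam * B) * (n%:R^-1 * \sum_p y p)) - lam * T).
Proof.
move=> lam_ge0 lamB_lt1 y_bnd; set a := lam / (1 - lam * B) * _.
have n_pos : (0 : R) < n%:R by rewrite ltr0n.
have a_ge0 : 0 <= a.
  have y_sum_ge0 : 0 <= \sum_p y p by apply: sumr_ge0 => p _; case/andP: (y_bnd p).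
  by rewrite !mulr_ge0 // ?invr_ge0 ?ler0n // subr_ge0 ltW.
have mgf_le : \sum_(p < n) expR (lam * y p) <= n%:R * (1 + a).
  have -> : n%:R * (1 + a) = \sum_(p < n) (1 + lam * y p / (1 - lam * B)).
    rewrite big_split sumr_const card_ord /= -mulr_suml -mulr_sumr /a.
    by field; rewrite !gt_eqF // subr_gt0.
  apply: ler_sum => p _; apply: expR_le_1Dx_div => //.
  by case/andP: (y_bnd p) => y_ge0 y_le; rewrite mulr_ge0 ?ler_wpM2l.
apply: le_trans (sample_prob_gt_le_mgf _ T lam_ge0) _.
under eq_bigr do rewrite mulr_sumr.
rewrite (sum_ffun_expR_sum m (fun p => lam * y p)) /= addrC expRD -mulrA.
rewrite ler_pM2l ?expR_gt0 // ler_pdivrMr // natrX expRM_natl -exprMn.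
rewrite lerXn2r ?nnegrE ?mulr_ge0 ?expR_ge0 ?ler0n //.
  by apply: sumr_ge0 => p _; rewrite expR_ge0.
by apply: le_trans mgf_le _; rewrite mulrC ler_wpM2r ?ler0n ?expR_ge1Dx.
Qed.

Lemma sample_prob_sum_in_gt_le (A : {set 'I_n}) (d : 'I_n -> R) (delta xi B : R) :
  0 <= delta -> 0 <= xi -> 0 <= B -> (forall p, p \in A -> 0 <= d p <= B) ->
  sample_prob R (fun s : sample => ~~ (\sum_(i < m | s i \in A) d (s i)
    <= (1 + delta) * (m%:R / n%:R) * (\sum_(p in A) d p + xi * #|A|%:R * B)))
  <= expR (- (delta * xi * #|A|%:R * m%:R / n%:R)).
Proof.
move=> delta_ge0 xi_ge0 B_ge0 d_bnd.
have n_pos : (0 : R) < n%:R by rewrite ltr0n.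
set T := (1 + delta) * _ * _.
have T_ge0 : 0 <= T.
  have dA_ge0 : 0 <= \sum_(p in A) d p by apply: sumr_ge0 => p /d_bnd /andP[].
  by rewrite !mulr_ge0 ?addr_ge0 ?invr_ge0 ?ler0n // !mulr_ge0 ?ler0n.
case: (eqVneq B 0) => [B0 | B_neq0].
  rewrite (@eq_sample_prob _ pred0) => [|s]; last first.
    apply/negbTE; rewrite negbK; apply: le_trans T_ge0; apply: sumr_le0 => i /d_bnd.
    by rewrite B0 => /andP[].
  by rewrite /sample_prob (_ : [set s : sample | pred0 s] = set0) // cards0 mul0r expR_ge0.
have B_gt0 : 0 < B by rewrite lt_def B_neq0.
set y := fun p => if p \in A then d p else 0.
(* This choice makes lam / (1 - lam B) = delta / B, so the cost terms cancel in the exponent. *)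
set lam := delta / ((1 + delta) * B).
have lam_ge0 : 0 <= lam by rewrite divr_ge0 ?mulr_ge0 ?addr_ge0.
have lamB : lam * B = delta / (1 + delta) by rewrite /lam; field; rewrite B_neq0 gt_eqF ?ltr_wpDr.
have lamB_lt1 : lam * B < 1 by rewrite lamB ltr_pdivrMr ?ltr_wpDr // mul1r ltrDr.
have y_bnd p : 0 <= y p <= B by rewrite /y; case: ifP => [/d_bnd | _] //; rewrite lexx.
rewrite (@eq_sample_prob _ (fun s => T < \sum_(i < m) y (s i))) => [|s]; last first.
  by rewrite /= -ltNge big_mkcond.
suff -> : - (delta * xi * #|A|%:R * m%:R / n%:R) =
    m%:R * (lam / (1 - lam * B) * (n%:R^-1 * \sum_p y p)) - lam * T.
  exact: sample_prob_sum_gt_le.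
rewrite /y -big_mkcond /= /T lamB /lam; field.
by rewrite B_neq0 addrK oner_neq0 !gt_eqF ?ltr_wpDr.
Qed.

End SampleProb.

Lemma sample_size_ge (R : realFieldType) (k L m eps delta xi : R) :
  0 < k -> 0 < L -> 0 < eps -> 0 < delta < 1 -> 0 < xi ->
  3 * k / (delta ^+ 2 * eps) * L <= m ->
  k / (2 * xi ^+ 2 * eps * (1 - delta)) * L <= m ->
  k * L <= m * delta * xi * eps.
Proof.
move=> k_gt0 L_gt0 eps_gt0 /andP[delta_gt0 delta_lt1] xi_gt0.
rewrite mulrAC ler_pdivrMr ?mulr_gt0 ?exprn_gt0 // => m_ge1.
rewrite mulrAC ler_pdivrMr ?mulr_gt0 ?exprn_gt0 ?subr_gt0 // => m_ge2.
set u := m * delta * xi * eps; set v := k * L.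
have v_gt0 : 0 < v by rewrite mulr_gt0.
have m_gt0 : 0 < m.
  have : 0 < m * (delta ^+ 2 * eps) by apply: lt_le_trans m_ge1; rewrite !mulr_gt0.
  by rewrite pmulr_lgt0 // mulr_gt0 ?exprn_gt0.
have u_ge0 : 0 <= u by rewrite !mulr_ge0 ?ltW.
rewrite leNgt; apply/negP => u_lt_v.
(* Multiplying the two lower bounds on m gives 3 v^2 <= 2 (1 - delta) u^2 < 2 v^2. *)
have sq_lt : u ^+ 2 < v ^+ 2.
  by rewrite ltr_pXn2r // nnegrE ltW.
have prod_le : 3 * v * v <= 2 * (1 - delta) * u ^+ 2.
  have -> : 3 * v * v = 3 * k * L * (k * L) by rewrite /v; ring.
  have -> : 2 * (1 - delta) * u ^+ 2 =
      m * (delta ^+ 2 * eps) * (m * (2 * xi ^+ 2 * eps * (1 - delta))) by rewrite /u; ring.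
  by apply: ler_pM m_ge1 m_ge2; rewrite !mulr_ge0 // ltW.
have : delta * u ^+ 2 >= 0 by rewrite mulr_ge0 ?sqr_ge0 ?ltW.
nra.
Qed.

Lemma cluster_exponent_ge (R : realFieldType) (k L m n c eps delta xi : R) :
  0 < k -> 0 < L -> 0 < n -> 0 < eps -> 0 < delta < 1 -> 0 < xi ->
  3 * k / (delta ^+ 2 * eps) * L <= m ->
  k / (2 * xi ^+ 2 * eps * (1 - delta)) * L <= m ->
  eps / k * n <= c ->
  L <= delta * xi * c * m / n.
Proof.
move=> k_gt0 L_gt0 n_gt0 eps_gt0 delta01 xi_gt0 m_ge1 m_ge2.
rewrite mulrAC ler_pdivrMr // => c_ge.
have kL_le := sample_size_ge k_gt0 L_gt0 eps_gt0 delta01 xi_gt0 m_ge1 m_ge2.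
have mdx_gt0 : 0 < m * delta * xi.
  by rewrite -(pmulr_lgt0 _ eps_gt0); apply: lt_le_trans kL_le; rewrite mulr_gt0.
rewrite ler_pdivlMr // -(ler_pM2l k_gt0).
have := ler_wpM2r (ltW n_gt0) kL_le; have := ler_wpM2l (ltW mdx_gt0) c_ge.
lra.
Qed.

Theorem lemma4 (R : realType) (n D k z : nat) (x : 'I_n -> 'rV[R]_D)
    (C : 'I_k -> {set 'I_n}) (eps1 eps2 eta delta xi : R) (m : nat) :
  injective x ->
  (0 < k)%N -> (0 < z)%N -> (z < n)%N ->
  optimal_clustering z x C ->
  significant z C eps1 eps2 ->
  0 < eta < 1 -> 0 < delta < 1 -> 0 < xi < 1 ->
  let bound := Num.max (3 * k%:R / (delta ^+ 2 * eps1) * ln (2 * k%:R / eta))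
                       (k%:R / (2 * xi ^+ 2 * eps1 * (1 - delta)) * ln (2 * k%:R / eta)) in
  bound <= m%:R < bound + 1 ->
  (1 - eta) ^+ 2 <=
  @sample_prob R n m (fun s : {ffun 'I_m -> 'I_n} =>
    [forall j : 'I_k,
      \sum_(i < m | s i \in C j) sqdist (x (s i)) (mean x (C j))
      <= (1 + delta) * (m%:R / n%:R) *
         (\sum_(p in C j) sqdist (x p) (mean x (C j))
          + xi * #|C j|%:R * max_diam x C ^+ 2)]).
Proof.
move=> _ k_gt0 _ z_lt_n _ [eps1_gt0 [_ [large_clusters _]]] /andP[eta_gt0 eta_lt1]
  delta01 /andP[xi_gt0 _] bound /andP[m_ge _].
have [delta_gt0 _] := andP delta01.
have n_gt0 : (0 < n)%N by apply: leq_ltn_trans z_lt_n.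
have k_pos : (0 : R) < k%:R by rewrite ltr0n.
set L := ln (2 * k%:R / eta) in bound m_ge.
have ratio_gt1 : 1 < 2 * k%:R / eta.
  have : (1 : R) <= k%:R by rewrite ler1n.
  rewrite ltr_pdivlMr // mul1r; lra.
have expNL : expR (- L) = eta / (2 * k%:R).
  by rewrite expRN lnK ?invf_div // posrE (lt_trans ltr01 ratio_gt1).
move: m_ge; rewrite /bound ge_max => /andP[m_ge1 m_ge2].
apply: (le_trans _ (sample_prob_forall_ge R n_gt0 _)).
have eta_sq_le : (1 - eta) ^+ 2 <= 1 - eta / 2.
  have : eta * eta <= eta by rewrite ler_piMl // ltW.
  lra.
apply: le_trans eta_sq_le _; rewrite lerD2l lerN2.
have -> : eta / 2 = \sum_(j < k) expR (- L).
  by rewrite sumr_const card_ord expNL -mulr_natl; field; rewrite gt_eqF.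
apply: ler_sum => j _.
have d_bnd p : p \in C j -> 0 <= sqdist (x p) (mean x (C j)) <= max_diam x C ^+ 2.
  by move=> pC; rewrite sqdist_ge0 sqdist_mean_le_max_diam.
apply: le_trans (sample_prob_sum_in_gt_le m n_gt0
  (ltW delta_gt0) (ltW xi_gt0) (sqr_ge0 _) d_bnd) _.
rewrite ler_expR lerN2.
have n_pos : (0 : R) < n%:R by rewrite ltr0n.
exact: cluster_exponent_ge k_pos (ln_gt0 ratio_gt1) n_pos eps1_gt0 delta01 xi_gt0
  m_ge1 m_ge2 (large_clusters j).
Qed.
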